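(* Let $k\ge 4$ and let $C$ be a binary Solomon–Stiffler code with parameters $(k,s;u_1,\dots,u_p)$ (as defined in the context). Then the following three statements are equivalent: (1) $u_p\ge 3$ (this condition being vacuous when $p=0$); (2) $C$ is self-orthogonal; (3) $C$ is doubly-even.
   Context: Let $S_k$ be the $k\times(2^k-1)$ binary matrix whose columns are all nonzero vectors of $\mathbb{F}_2^k$, and for an integer $s\ge1$ let $sS_k$ denote $s$ copies of $S_k$ placed side by side. A binary Solomon–Stiffler code with parameters $(k,s;u_1,\dots,u_p)$, where $s\ge1$, $p\ge0$ and $k>u_1>u_2>\cdots>u_p\ge1$ are integers, is defined as follows: choose subspaces $V_1,\dots,V_p$ of $\mathbb{F}_2^k$ with $\dim V_i=u_i$ such that every nonzero vector of $\mathbb{F}_2^k$ lies in at most $s$ of the $V_i$; let $G'$ be the matrix whose columns are the nonzero vectors of $V_1,\dots,V_p$ (with multiplicity), viewed as a submatrix of $sS_k$; let $G$ be obtained from $sS_k$ by deleting the columns of $G'$. The code generated by $G$ is the Solomon–Stiffler code; it is a binary $[s(2^k-1)-\sum_{i=1}^p(2^{u_i}-1),\,k,\,s2^{k-1}-\sum_{i=1}^p2^{u_i-1}]$ code. A binary code is self-orthogonal if $C\subseteq C^\perp$, and doubly-even if all its codeword weights are divisible by $4$. *)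

From HB Require Import structures.
From mathcomp Require Import all_boot all_order all_algebra.
Set Implicit Arguments. Unset Strict Implicit. Unset Printing Implicit Defensive.
Import GRing.Theory.
Local Open Scope ring_scope.

Notation F2 := 'F_2.

Definition nonzero_vecs (k : nat) (V : {vspace 'rV[F2]_k}) : seq 'rV[F2]_k :=
  [seq v <- enum 'rV[F2]_k | (v != 0) && (v \in V)].

Definition simplex_cols (k : nat) : seq 'rV[F2]_k :=
  [seq v <- enum 'rV[F2]_k | v != 0].
Definition sSk_cols (k s : nat) : seq 'rV[F2]_k := flatten (nseq s (simplex_cols k)).

Definition Gprime_cols (k p : nat) (V : 'I_p -> {vspace 'rV[F2]_k}) : seq 'rV[F2]_k :=
  flatten [seq nonzero_vecs (V i) | i <- enum 'I_p].

(* Columns of G: those of s S_k with the columns of G' deleted (multiset difference). *)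
Definition ss_cols (k s p : nat) (V : 'I_p -> {vspace 'rV[F2]_k}) : seq 'rV[F2]_k :=
  foldr (fun x c => rem x c) (sSk_cols k s) (Gprime_cols V).

Definition ss_len (k s p : nat) (V : 'I_p -> {vspace 'rV[F2]_k}) : nat :=
  size (ss_cols s V).

Definition ss_gen (k s p : nat) (V : 'I_p -> {vspace 'rV[F2]_k}) :
  'M[F2]_(k, ss_len s V) :=
  \matrix_(i < k, j < ss_len s V) (nth 0 (ss_cols s V) j) 0 i.

Definition lin_code (k n : nat) (G : 'M[F2]_(k, n)) : {set 'rV[F2]_n} :=
  [set m *m G | m : 'rV[F2]_k].

Definition ss_code (k s p : nat) (V : 'I_p -> {vspace 'rV[F2]_k}) :
  {set 'rV[F2]_(ss_len s V)} := lin_code (ss_gen s V).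

Definition dotp (n : nat) (x y : 'rV[F2]_n) : F2 := \sum_(j < n) x 0 j * y 0 j.
Definition dual_code (n : nat) (C : {set 'rV[F2]_n}) : {set 'rV[F2]_n} :=
  [set x | [forall c in C, dotp x c == 0]].
Definition self_orthogonal (n : nat) (C : {set 'rV[F2]_n}) : Prop :=
  C \subset dual_code C.
Definition wt (n : nat) (x : 'rV[F2]_n) : nat := #|[set j : 'I_n | x 0 j != 0]|.
Definition doubly_even (n : nat) (C : {set 'rV[F2]_n}) : Prop :=
  forall c, c \in C -> (4 %| wt c)%N.

(* Admissible Solomon--Stiffler parameters (k,s;u_1,...,u_p) with subspaces V_i
   (indices 0..p-1 here stand for 1..p). *)
Definition ss_params (k s p : nat) (u : 'I_p -> nat) (V : 'I_p -> {vspace 'rV[F2]_k})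
  : Prop :=
  [/\ (1 <= s)%N,
      (forall i : 'I_p, (1 <= u i < k)%N),
      (forall i j : 'I_p, (i < j)%N -> (u j < u i)%N),
      (forall i : 'I_p, \dim (V i) = u i) &
      (forall v : 'rV[F2]_k, v != 0 -> (#|[set i : 'I_p | v \in V i]| <= s)%N)].

From HB Require Import structures.
From mathcomp Require Import all_boot all_order all_algebra finfield.
From mathcomp Require Import zify.
Set Implicit Arguments. Unset Strict Implicit. Unset Printing Implicit Defensive.
Import GRing.Theory.
Local Open Scope ring_scope.

(* For a message m, let N(W, m) be the number of vectors of W not orthogonal
   to m; it is 0 or 2^(dim W - 1).  The codeword mG has weight
   s N(F_2^k, m) - sum_i N(V_i, m), so if every u_i >= 3 all weights are
   divisible by 4.  Doubly-even binary codes are self-orthogonal since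
   wt(x + y) = wt x + wt y - 2 |supp x /\ supp y|.  Conversely, in a
   self-orthogonal code weights are even and additive mod 4, while modulo
   2^(u_p) the weight of mG is -N(V_p, m): for u_p = 1 some codeword has odd
   weight, and for u_p = 2 there are codewords c1, c2, c1 + c2 all of weight
   2 mod 4. *)

Lemma pchar_F2 : 2%N \in [pchar 'F_2].
Proof. exact: pchar_Fp. Qed.

Lemma F2_cases (a : 'F_2) : a = 0 \/ a = 1.
Proof. by case: a => [[|[|?]] //= ?]; [left | right]; apply: val_inj. Qed.

Lemma F2_neq0 (a : 'F_2) : (a != 0) = (a == 1).
Proof. by case: (F2_cases a) => ->; rewrite ?eqxx ?oner_eq0 // eq_sym oner_eq0. Qed.

Lemma F2_natr_eq0 n : (n%:R == 0 :> 'F_2) = (2 %| n)%N.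
Proof. by rewrite (dvdn_pcharf pchar_F2). Qed.

Definition overlap n (x y : 'rV['F_2]_n) : nat :=
  #|[set j | (x 0 j != 0) && (y 0 j != 0)]|.

Section InnerProduct.
Variable n : nat.
Implicit Types x y z : 'rV['F_2]_n.

Lemma addrr_rV2 x : x + x = 0.
Proof. by apply/rowP => j; rewrite !mxE (addrr_pchar2 pchar_F2). Qed.

Lemma dotpDl x y z : dotp (x + y) z = dotp x z + dotp y z.
Proof. by rewrite /dotp -big_split; apply: eq_bigr => j _; rewrite mxE mulrDl. Qed.

Lemma dotpDr x y z : dotp x (y + z) = dotp x y + dotp x z.
Proof. by rewrite /dotp -big_split; apply: eq_bigr => j _; rewrite mxE mulrDr. Qed.

Lemma dotp0r x : dotp x 0 = 0.
Proof. by rewrite /dotp big1 // => j _; rewrite mxE mulr0. Qed.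

Lemma dotp_delta (a : 'I_n) y : dotp (delta_mx 0 a) y = y 0 a.
Proof.
rewrite /dotp (bigD1 a) //= big1 => [|j /negbTE ja]; rewrite mxE ?eqxx ?mul1r ?addr0 //.
by rewrite ja mul0r.
Qed.

Lemma dotp_overlap x y : dotp x y = (overlap x y)%:R.
Proof.
rewrite /overlap -sum1dep_card natr_sum /dotp [RHS]big_mkcond; apply: eq_bigr => j _.
by case: (F2_cases (x 0 j)) (F2_cases (y 0 j)) => -> [] ->;
  rewrite ?eqxx ?oner_eq0 ?mulr0 ?mul0r ?mulr1.
Qed.

Lemma dotpp x : dotp x x = (wt x)%:R.
Proof. by rewrite dotp_overlap; congr (_%:R); apply: eq_card => j; rewrite !inE andbb. Qed.

Lemma wtD x y : (wt (x + y) + 2 * overlap x y = wt x + wt y)%N.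
Proof.
have card_sum (P : pred 'I_n) : #|[set j | P j]| = (\sum_j P j)%N.
  by rewrite -sum1dep_card big_mkcond; apply: eq_bigr => j _; case: (P j).
rewrite /wt /overlap !card_sum big_distrr -!big_split; apply: eq_bigr => j _; rewrite mxE.
by case: (F2_cases (x 0 j)) (F2_cases (y 0 j)) => -> [] ->;
  rewrite ?addr0 ?add0r ?(addrr_pchar2 pchar_F2) ?eqxx ?oner_eq0.
Qed.

Lemma dotp_doubly_even x y :
  (4 %| wt x)%N -> (4 %| wt y)%N -> (4 %| wt (x + y))%N -> dotp x y = 0.
Proof. by move=> *; apply/eqP; rewrite dotp_overlap F2_natr_eq0; have := wtD x y; lia. Qed.

End InnerProduct.

Lemma self_orthogonal_wt_even n (C : {set 'rV['F_2]_n}) c :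
  self_orthogonal C -> c \in C -> (2 %| wt c)%N.
Proof.
move=> /subsetP SO cC; have := SO c cC; rewrite inE => /forall_inP/(_ c cC).
by rewrite dotpp F2_natr_eq0.
Qed.

Lemma self_orthogonal_wtD n (C : {set 'rV['F_2]_n}) c1 c2 :
  self_orthogonal C -> c1 \in C -> c2 \in C ->
  wt (c1 + c2) = (wt c1 + wt c2)%N %[mod 4].
Proof.
move=> /subsetP SO c1C c2C; have := SO c1 c1C; rewrite inE => /forall_inP/(_ c2 c2C).
rewrite dotp_overlap F2_natr_eq0 => overlap_even.
have : (wt (c1 + c2) + 2 * overlap c1 c2 = wt c1 + wt c2)%N := wtD c1 c2.
lia.
Qed.

Lemma mem_lin_code k n (G : 'M['F_2]_(k, n)) m : m *m G \in lin_code G.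
Proof. exact: imset_f. Qed.

Lemma doubly_even_self_orthogonal k n (G : 'M['F_2]_(k, n)) :
  doubly_even (lin_code G) -> self_orthogonal (lin_code G).
Proof.
move=> DE; apply/subsetP => _ /imsetP[m1 _ ->]; rewrite inE.
apply/forall_inP => _ /imsetP[m2 _ ->]; apply/eqP/dotp_doubly_even;
  rewrite -?mulmxDl; exact/DE/mem_lin_code.
Qed.

Lemma rV_nz_coord (R : zmodType) n (x : 'rV[R]_n) : x != 0 -> exists a, x 0 a != 0.
Proof.
move=> nz; apply/existsP; apply: contraR nz; rewrite negb_exists => /forallP x0.
by apply/eqP/rowP => a; rewrite mxE; apply/eqP/negPn/x0.
Qed.

Definition nonorth k (W : {vspace 'rV['F_2]_k}) (m : 'rV['F_2]_k) : nat :=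
  count (fun v => dotp m v != 0) (nonzero_vecs W).

Section NonOrthogonal.
Variables (k : nat) (W : {vspace 'rV['F_2]_k}).
Implicit Types m v : 'rV['F_2]_k.

Lemma nonorthE m : nonorth W m = #|[set v in W | dotp m v != 0]|.
Proof.
rewrite /nonorth /nonzero_vecs count_filter -size_filter.
rewrite -(card_uniqP _); last by rewrite filter_uniq ?index_enum_uniq ?enum_uniq.
apply: eq_card => v; rewrite !inE mem_filter mem_enum andbT /= andbC -andbA.
by case: eqVneq => [->|]; rewrite ?dotp0r ?eqxx ?andbF.
Qed.

Lemma nonorth_gt0 m v : v \in W -> dotp m v != 0 -> (0 < nonorth W m)%N.
Proof. by move=> vW mv; rewrite nonorthE; apply/card_gt0P; exists v; rewrite inE vW. Qed.

Lemma nonorth_gt0E m : (0 < nonorth W m)%N -> nonorth W m = (2 ^ (\dim W).-1)%N.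
Proof.
rewrite nonorthE => /card_gt0P[z]; rewrite inE => /andP[zW mz].
set A1 := [set v in W | _]; pose A0 := [set v in W | dotp m v == 0].
(* Translation by z exchanges the two halves A0 and A1 of W. *)
have A1E : A1 = [set v + z | v in A0].
  apply/setP => w; rewrite inE; apply/andP/imsetP => [[wW mw] | [v]].
  - exists (w + z); last by rewrite -addrA addrr_rV2 addr0.
    rewrite inE memvD //= dotpDr.
    by move: mw mz; rewrite !F2_neq0 => /eqP-> /eqP->; rewrite (addrr_pchar2 pchar_F2).
  - by rewrite inE => /andP[vW /eqP mv] ->; rewrite memvD //= dotpDr mv add0r.
have cardW : (#|A0| + #|A1| = 2 ^ \dim W)%N.
  have := card_vspace W; rewrite card_Fp // => <-.
  rewrite -(cardID [pred v | dotp m v != 0] W) addnC.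
  by congr (_ + _)%N; apply: eq_card => v; rewrite !inE // negbK andbC.
rewrite A1E card_imset in cardW *; last exact: addIr.
by case: (\dim W) cardW => [|d]; rewrite /= ?expn0 ?expnS; move: #|A0| => a; lia.
Qed.

Lemma dvdn_nonorth m e : (e < \dim W)%N -> (2 ^ e %| nonorth W m)%N.
Proof.
move=> lt_e_dim; case: (posnP (nonorth W m)) => [-> | /nonorth_gt0E ->].
  exact: dvdn0.
by apply: dvdn_exp2l; lia.
Qed.

Lemma exists_nonorth : (0 < \dim W)%N -> exists m, (0 < nonorth W m)%N.
Proof.
rewrite lt0n dimv_eq0 -vpick0 => /rV_nz_coord[a xa].
by exists (delta_mx 0 a); apply: nonorth_gt0 (memv_pick W) _; rewrite dotp_delta.
Qed.

Lemma exists_nonorth2 : (1 < \dim W)%N -> exists m1 m2,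
  [/\ (0 < nonorth W m1)%N, (0 < nonorth W m2)%N & (0 < nonorth W (m1 + m2))%N].
Proof.
move=> dimW; set x := vpick W; have xW : x \in W := memv_pick W.
have x0 : x != 0 by rewrite vpick0 -dimv_eq0 -lt0n (ltnW dimW).
have [y /andP[yW yx]] : exists y, (y \in W) && (y \notin <[x]>%VS).
  apply/existsP; apply: contraTT dimW; rewrite negb_exists -leqNgt => /forallP noy.
  have /dimvS : (W <= <[x]>)%VS by apply/subvP => v vW; move: (noy v); rewrite vW negbK.
  by move/leq_trans; apply; rewrite dim_vline leq_b1.
have [a xa] := rV_nz_coord x0.
(* z vanishes at a, so delta a + delta b is not orthogonal to z. *)
have [z [zW zx za]] : exists z, [/\ z \in W, z \notin <[x]>%VS & z 0 a = 0].
  case: (F2_cases (y 0 a)) => ya; first by exists y.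
  exists (x + y); rewrite memvD // rpredDl ?memv_line // mxE ya.
  by move: xa; rewrite F2_neq0 => /eqP->; rewrite (addrr_pchar2 pchar_F2).
have [b zb] : exists b, z 0 b != 0.
  by apply: rV_nz_coord; apply: contraNneq zx => ->; rewrite mem0v.
exists (delta_mx 0 a), (delta_mx 0 b); split.
- by apply: nonorth_gt0 xW _; rewrite dotp_delta.
- by apply: nonorth_gt0 zW _; rewrite dotp_delta.
- by apply: nonorth_gt0 zW _; rewrite dotpDl !dotp_delta za add0r.
Qed.

End NonOrthogonal.

Lemma count_foldr_rem (T : eqType) (P : pred T) (s r : seq T) :
  (forall x, count_mem x r <= count_mem x s)%N ->
  (count P (foldr (fun x c => rem x c) s r) + count P r = count P s)%N.
Proof.
elim: r P => [|x r IHr] P le_rs /=; first by rewrite addn0.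
have le_r'_s y : (count_mem y r <= count_mem y s)%N.
  by apply: leq_trans (le_rs y); rewrite /= leq_addl.
set d := foldr _ s r.
have x_d : x \in d.
  rewrite -has_pred1 has_count; have := IHr (pred1 x) le_r'_s; have := le_rs x.
  by rewrite /= eqxx -/d; lia.
have := permP (perm_to_rem x_d) P; have := IHr P le_r'_s; rewrite -/d /=; lia.
Qed.

Lemma count_mem_nonzero_vecs k (W : {vspace 'rV['F_2]_k}) v :
  count_mem v (nonzero_vecs W) = ((v != 0) && (v \in W)).
Proof.
rewrite count_uniq_mem; last by rewrite filter_uniq ?index_enum_uniq ?enum_uniq.
by rewrite mem_filter mem_enum andbT.
Qed.

Lemma count_ss_cols k s p (V : 'I_p -> {vspace 'rV['F_2]_k}) (P : pred 'rV['F_2]_k) :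
  (forall v : 'rV['F_2]_k, v != 0 -> (#|[set i | v \in V i]| <= s)%N) ->
  (count P (ss_cols s V) + \sum_i count P (nonzero_vecs (V i))
    = s * count P (nonzero_vecs fullv))%N.
Proof.
have count_Gprime Q : count Q (Gprime_cols V) = (\sum_i count Q (nonzero_vecs (V i)))%N.
  by rewrite /Gprime_cols count_flatten sumnE !big_map.
have count_sSk Q : count Q (sSk_cols k s) = (s * count Q (nonzero_vecs fullv))%N.
  rewrite /sSk_cols count_flatten sumnE big_map big_nseq iter_addn_0 mulnC.
  by congr (_ * count _ _)%N; apply: eq_filter => v; rewrite memvf andbT.
move=> cover; rewrite -count_Gprime -count_sSk; apply: count_foldr_rem => v.
rewrite count_Gprime count_sSk count_mem_nonzero_vecs memvf andbT.
under eq_bigr do rewrite count_mem_nonzero_vecs.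
case: eqVneq => [_|v0]; first by rewrite big1.
rewrite muln1 (leq_trans _ (cover v v0)) // -sum1dep_card [leqRHS]big_mkcond.
by apply: leq_sum => i _; case: (v \in V i).
Qed.

Lemma wt_ss_gen k s p (V : 'I_p -> {vspace 'rV['F_2]_k}) m :
  wt (m *m ss_gen s V) = count (fun c => dotp m c != 0) (ss_cols s V).
Proof.
rewrite -sum1_count (big_nth 0) big_mkord sum1dep_card; apply: eq_card => j.
rewrite !inE !mxE /dotp; congr (_ != 0); apply: eq_bigr => i _; by rewrite mxE.
Qed.

Lemma dimvf_rV k : \dim (fullv : {vspace 'rV['F_2]_k}) = k.
Proof. by rewrite dimvf dim_matrix mul1r. Qed.

Section SolomonStiffler.
Variables (k s p : nat) (u : 'I_p -> nat) (V : 'I_p -> {vspace 'rV['F_2]_k}).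
Hypothesis dimV : forall i, \dim (V i) = u i.
Hypothesis cover : forall v : 'rV['F_2]_k, v != 0 -> (#|[set i | v \in V i]| <= s)%N.

Lemma mem_ss_code m : m *m ss_gen s V \in ss_code s V.
Proof. exact: mem_lin_code. Qed.

Lemma wt_ss_code m :
  (wt (m *m ss_gen s V) + \sum_i nonorth (V i) m = s * nonorth fullv m)%N.
Proof. by rewrite wt_ss_gen; apply: count_ss_cols. Qed.

Lemma ss_doubly_even : (2 < k)%N -> (forall i, 2 < u i)%N -> doubly_even (ss_code s V).
Proof.
move=> k_gt2 u_gt2 _ /imsetP[m _ ->].
have d_sum : (4 %| \sum_i nonorth (V i) m)%N.
  by apply: dvdn_sum => i _; apply: (@dvdn_nonorth _ _ _ 2); rewrite dimV.
rewrite -(dvdn_addl _ d_sum) wt_ss_code; apply/dvdn_mull/(@dvdn_nonorth _ _ _ 2).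
by rewrite dimvf_rV.
Qed.

Section SmallestSubspace.
Variable i0 : 'I_p.
Hypothesis i0_min : forall j, j != i0 -> (u i0 < u j)%N.
Hypothesis i0_lt_k : (u i0 < k)%N.

Lemma dvdn_wt_ss_code m : (2 ^ u i0 %| wt (m *m ss_gen s V) + nonorth (V i0) m)%N.
Proof.
have d_rest : (2 ^ u i0 %| \sum_(j | j != i0) nonorth (V j) m)%N.
  by apply: dvdn_sum => j /i0_min lt_ij; apply: dvdn_nonorth; rewrite dimV.
have := wt_ss_code m; rewrite (bigD1 i0) //= addnA => E.
rewrite -(dvdn_addl _ d_rest) E; apply/dvdn_mull/dvdn_nonorth.
by rewrite dimvf_rV.
Qed.

Lemma ss_not_self_orthogonal_dim1 : u i0 = 1%N -> ~ self_orthogonal (ss_code s V).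
Proof.
move=> u1 SO; have [|m Bm] := @exists_nonorth _ (V i0); first by rewrite dimV u1.
have := dvdn_wt_ss_code m; rewrite (nonorth_gt0E Bm) dimV u1 expn1 expn0.
by rewrite (dvdn_addr _ (self_orthogonal_wt_even SO (mem_ss_code m))).
Qed.

Lemma ss_not_self_orthogonal_dim2 : u i0 = 2%N -> ~ self_orthogonal (ss_code s V).
Proof.
move=> u2 SO; have [|m1 [m2 [B1 B2 B12]]] := @exists_nonorth2 _ (V i0).
  by rewrite dimV u2.
have wt_mod4 m : (0 < nonorth (V i0) m)%N -> wt (m *m ss_gen s V) = 2 %[mod 4].
  by move=> Bm; have := dvdn_wt_ss_code m; rewrite (nonorth_gt0E Bm) dimV u2 expn1; lia.
have := self_orthogonal_wtD SO (mem_ss_code m1) (mem_ss_code m2).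
by rewrite -mulmxDl (wt_mod4 _ B12) -modnDm (wt_mod4 _ B1) (wt_mod4 _ B2).
Qed.

End SmallestSubspace.
End SolomonStiffler.

Section DecreasingDimensions.
Variables (p : nat) (u : 'I_p -> nat).
Hypothesis u_dec : forall i j : 'I_p, (i < j)%N -> (u j < u i)%N.

Lemma last_ord_min (i0 j : 'I_p) : val i0 = p.-1 -> j != i0 -> (u i0 < u j)%N.
Proof.
move=> /= i0_last /eqP j_i0; apply: u_dec; have := ltn_ord j.
have : nat_of_ord j <> i0 by move=> /val_inj.
lia.
Qed.

Lemma last_ord_lb n :
  (forall i : 'I_p, val i = p.-1 -> (n <= u i)%N) <-> (forall i, n <= u i)%N.
Proof.
split=> [lb_last i | lb i _]; last exact: lb.
have lt_last : (p.-1 < p)%N by have := ltn_ord i; lia.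
have [-> | i_last] := eqVneq i (Ordinal lt_last); first exact: lb_last.
have := lb_last (Ordinal lt_last) erefl.
by have := @last_ord_min (Ordinal lt_last) i erefl i_last; lia.
Qed.

End DecreasingDimensions.

Theorem theorem4p3 (k s p : nat) (u : 'I_p -> nat)
    (V : 'I_p -> {vspace 'rV['F_2]_k}) :
  (4 <= k)%N -> ss_params s u V ->
  ((forall i : 'I_p, val i = p.-1 -> (3 <= u i)%N) <-> self_orthogonal (ss_code s V)) /\
  (self_orthogonal (ss_code s V) <-> doubly_even (ss_code s V)).
Proof.
move=> k_ge4 [_ u_bnd u_dec dimV cover].
have DE_SO : doubly_even (ss_code s V) -> self_orthogonal (ss_code s V).
  exact: doubly_even_self_orthogonal.
have ge3_DE : (forall i, 3 <= u i)%N -> doubly_even (ss_code s V).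
  by apply: ss_doubly_even dimV cover _; lia.
have SO_ge3 : self_orthogonal (ss_code s V) -> (forall i, 3 <= u i)%N.
  move=> SO; apply/(last_ord_lb u_dec) => i0 i0_last.
  have i0_min := last_ord_min u_dec i0_last.
  have [u1 | [u2 | //]] : u i0 = 1%N \/ u i0 = 2%N \/ (2 < u i0)%N.
    by have := u_bnd i0; lia.
  - by case: (ss_not_self_orthogonal_dim1 dimV cover i0_min _ u1 SO); lia.
  - by case: (ss_not_self_orthogonal_dim2 dimV cover i0_min _ u2 SO); lia.
rewrite (last_ord_lb u_dec); tauto.
Qed.
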